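(* Suppose $\mathbf{v}_1(0),\dots,\mathbf{v}_m(0)$ are generated i.i.d. from $N(0,\alpha^2\mathbf{I})$, and that for each $k$, $\|\mathbf{v}_k(t)-\mathbf{v}_k(0)\|_2\le\tilde R_v:=\frac{\sqrt{2\pi}\,\alpha\mu_0}{8n(m/\delta)^{1/d}}$. Then with probability at least $1-\delta$, $\|\mathbf{G}(t)-\mathbf{G}(0)\|_2\le\frac{\mu_0}{4}$.
   Context: Data $\mathbf{x}_1,\dots,\mathbf{x}_n\in\mathbb{R}^d$ with $\|\mathbf{x}_i\|_2\le1$ and $\mathbf{x}_i\ne\beta\mathbf{x}_j$ for $i\ne j$, $\beta\ne0$. The vectors $\mathbf{v}_k(t)$ are the first-layer parameters at time/iteration $t$ of weight-normalized training (gradient flow or gradient descent) of $f(\mathbf{x})=\frac{1}{\sqrt m}\sum_kc_k\sigma(g_k\mathbf{v}_k^\top\mathbf{x}/\|\mathbf{v}_k\|_2)$ on the square loss, started from $\mathbf{v}_k(0)\sim N(0,\alpha^2\mathbf{I})$, $c_k$ uniform on $\{-1,1\}$, $g_k(0)=\|\mathbf{v}_k(0)\|_2/\alpha$; $\sigma(s)=\max\{s,0\}$. $\mathbf{G}_{ij}(t)=\frac1m\sum_k\sigma(\mathbf{v}_k(t)^\top\mathbf{x}_i)\sigma(\mathbf{v}_k(t)^\top\mathbf{x}_j)/\|\mathbf{v}_k(t)\|_2^2$. $\mu_0=\lambda_{\min}(\mathbf{G}^\infty)$ with $\mathbf{G}^\infty_{ij}=\mathbb{E}_{\mathbf{v}\sim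 N(0,\alpha^2\mathbf{I})}\langle\mathbf{x}_i^{\mathbf{v}},\mathbf{x}_j^{\mathbf{v}}\rangle\mathbb{1}\{\mathbf{v}^\top\mathbf{x}_i\ge0\}\mathbb{1}\{\mathbf{v}^\top\mathbf{x}_j\ge0\}$, $\mathbf{x}^{\mathbf{v}}=\mathbf{v}\mathbf{v}^\top\mathbf{x}/\|\mathbf{v}\|_2^2$. *)

From HB Require Import structures.
From mathcomp Require Import all_boot all_order all_algebra.
From mathcomp Require Import all_classical all_reals all_analysis.
Set Implicit Arguments. Unset Strict Implicit. Unset Printing Implicit Defensive.
Import Order.TTheory GRing.Theory Num.Theory.
Import numFieldNormedType.Exports.
Local Open Scope classical_set_scope.
Local Open Scope ring_scope.

Definition rnorm (R : realType) (k : nat) (u : 'rV[R]_k) : R :=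
  Num.sqrt (\sum_(i < k) u 0 i ^+ 2).

Definition dotv (R : realType) (k : nat) (u v : 'rV[R]_k) : R :=
  \sum_(i < k) u 0 i * v 0 i.

Definition relu (R : realType) (s : R) : R := Num.max s 0.

Definition spec_norm (R : realType) (n : nat) (A : 'M[R]_n) : R :=
  sup [set rnorm (u *m A) | u in [set u : 'rV[R]_n | rnorm u <= 1]].

(* Smallest eigenvalue (the matrices used are real symmetric, so all
   eigenvalues are real and there are finitely many). *)
Definition lambda_min (R : realType) (n : nat) (A : 'M[R]_n) : R :=
  inf [set a : R | eigenvalue A a].

Definition Gmat (R : realType) (n m d : nat) (X : 'I_n -> 'rV[R]_d)
    (v : 'I_m -> 'rV[R]_d) : 'M[R]_n :=
  \matrix_(i < n, j < n)
    (m%:R^-1 * \sum_(k < m)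
       relu (dotv (v k) (X i)) * relu (dotv (v k) (X j)) / (rnorm (v k)) ^+ 2).

Definition rvec (T : Type) (R : realType) (d : nat) (W : 'I_d -> T -> R)
    (w : T) : 'rV[R]_d := \row_(l < d) W l w.

(* G^infty_{ij} = E_v [ <x_i^v, x_j^v> 1{v^T x_i >= 0} 1{v^T x_j >= 0} ]
   with x^v = v v^T x / ||v||^2, so <x_i^v, x_j^v> = (v^T x_i)(v^T x_j)/||v||^2;
   the expectation is taken w.r.t. the law of the random vector W, which
   will be a N(0, alpha^2 I) vector. *)
Definition Ginf (dT : measure_display) (T : measurableType dT) (R : realType)
    (P : probability T R) (n d : nat) (W : 'I_d -> T -> R)
    (X : 'I_n -> 'rV[R]_d) : 'M[R]_n :=
  \matrix_(i < n, j < n)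
    fine ('E_P[fun w =>
      let v := rvec W w in
      dotv v (X i) * dotv v (X j) / (rnorm v) ^+ 2
        * (if 0 <= dotv v (X i) then 1 else 0)
        * (if 0 <= dotv v (X j) then 1 else 0)]).

Definition iid_gaussian (dT : measure_display) (T : measurableType dT)
    (R : realType) (P : probability T R) (m d : nat) (V : 'I_m -> 'I_d -> T -> R)
    (alpha : R) : Prop :=
  (forall k l, measurable_fun setT (V k l)) /\
  (forall k l (B : set R), measurable B ->
     P (V k l @^-1` B) = normal_prob 0 alpha B) /\
  (forall B : 'I_m -> 'I_d -> set R, (forall k l, measurable (B k l)) ->
     P [set w | forall k l, B k l (V k l w)] =
       (\prod_(k < m) \prod_(l < d) P (V k l @^-1` B k l))%E).

From HB Require Import structures.
From mathcomp Require Import all_boot all_order all_algebra.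
From mathcomp Require Import all_classical all_reals all_analysis.
From mathcomp Require Import ring lra measurable_realfun.
Set Implicit Arguments.
Unset Strict Implicit.
Unset Printing Implicit Defensive.
Import Order.TTheory GRing.Theory Num.Theory.
Import numFieldNormedType.Exports.
Local Open Scope classical_set_scope.
Local Open Scope ring_scope.

(* Each summand of G depends on v_k only through its direction u = v_k / |v_k|,
   as relu(u . x_i) relu(u . x_j).  For unit vectors at an angle theta <= pi/2
   this product moves by at most sin theta, and |v0| sin theta <= |v - v0|; for
   an obtuse angle already |v - v0| >= |v0|.  So every entry of G(t) - G(0) is
   at most R_v / min_k |v_k(0)|, and the spectral norm at most n times that.
   With K = (m/delta)^(1/d) and r = sqrt(2 pi) alpha / (2 K), a N(0, alpha^2)
   coordinate lies in [-r, r] with probability at most 2 r / sqrt(2 pi alpha^2)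
   = 1/K.  By independence and the union bound, with probability at least
   1 - m K^-d = 1 - delta every v_k(0) has a coordinate outside [-r, r], hence
   |v_k(0)| > r, and then n R_v / r = mu0 / 4. *)

Section Dotv.
Variables (R : realType) (k : nat).
Implicit Types (u v w a : 'rV[R]_k) (x : R).

Lemma dotvC u v : dotv u v = dotv v u.
Proof. by apply: eq_bigr => i _; rewrite mulrC. Qed.

Lemma dotvDl u u' v : dotv (u + u') v = dotv u v + dotv u' v.
Proof. by rewrite /dotv -big_split; apply: eq_bigr => i _; rewrite mxE mulrDl. Qed.

Lemma dotvZl x u v : dotv (x *: u) v = x * dotv u v.
Proof. by rewrite /dotv mulr_sumr; apply: eq_bigr => i _; rewrite mxE mulrA. Qed.

Lemma dotvBl u u' v : dotv (u - u') v = dotv u v - dotv u' v.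
Proof. by rewrite dotvDl -scaleN1r dotvZl mulN1r. Qed.

Lemma dotvZr x u v : dotv u (x *: v) = x * dotv u v.
Proof. by rewrite dotvC dotvZl dotvC. Qed.

Lemma dotvBr u v v' : dotv u (v - v') = dotv u v - dotv u v'.
Proof. by rewrite dotvC dotvBl (dotvC v) (dotvC v'). Qed.

Lemma dotvv_ge0 u : 0 <= dotv u u.
Proof. by apply: sumr_ge0 => i _; rewrite -expr2 sqr_ge0. Qed.

Lemma rnorm_ge0 u : 0 <= rnorm u.
Proof. exact: sqrtr_ge0. Qed.

Lemma rnorm_sqr u : rnorm u ^+ 2 = dotv u u.
Proof.
rewrite /rnorm sqr_sqrtr; last by apply: sumr_ge0 => i _; rewrite sqr_ge0.
by apply: eq_bigr => i _; rewrite expr2.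
Qed.

Lemma rnormB_sqr u v :
  rnorm (u - v) ^+ 2 = rnorm u ^+ 2 - 2 * dotv u v + rnorm v ^+ 2.
Proof. by rewrite !rnorm_sqr !(dotvBl, dotvBr) (dotvC v u); ring. Qed.

Lemma rnorm_le1 a : rnorm a <= 1 -> dotv a a <= 1.
Proof. by move=> h; rewrite -rnorm_sqr; have := rnorm_ge0 a; nra. Qed.

Lemma coord_le_rnorm u i : `|u 0 i| <= rnorm u.
Proof.
rewrite /rnorm -sqrtr_sqr ler_wsqrtr // (bigD1 i) //= lerDl.
by apply: sumr_ge0 => j _; rewrite sqr_ge0.
Qed.

Lemma dotv_self_eq0 u : dotv u u = 0 -> forall v, dotv u v = 0.
Proof.
move=> /eqP; rewrite psumr_eq0; last by move=> i _; rewrite -expr2 sqr_ge0.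
move=> /allP u0 v; apply: big1 => i _.
by have := u0 i (mem_index_enum i); rewrite /= mulf_eq0 orbb => /eqP ->; rewrite mul0r.
Qed.

Lemma dotv_CauchySchwarz u v : dotv u v ^+ 2 <= dotv u u * dotv v v.
Proof.
have [v0|v0] := eqVneq (dotv v v) 0.
  by rewrite v0 mulr0 dotvC dotv_self_eq0 // expr0n.
have vp : 0 < dotv v v by rewrite lt_def v0 dotvv_ge0.
have := dotvv_ge0 (dotv v v *: u - dotv u v *: v).
rewrite !(dotvBl, dotvBr, dotvZl, dotvZr) (dotvC v u) => h.
have : 0 <= dotv v v * (dotv u u * dotv v v - dotv u v ^+ 2) by nra.
by rewrite pmulr_rge0 // subr_ge0.
Qed.

Lemma dotv_sqr_le1 u a : dotv u u <= 1 -> dotv a a <= 1 -> dotv u a ^+ 2 <= 1.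
Proof.
move=> hu ha; apply: le_trans (dotv_CauchySchwarz u a) _.
by have := dotvv_ge0 u; have := dotvv_ge0 a; nra.
Qed.

Lemma bessel_orth_pair e w a : dotv e e = 1 -> dotv w e = 0 ->
  dotv w w * dotv e a ^+ 2 + dotv w a ^+ 2 <= dotv w w * dotv a a.
Proof.
move=> ee we; have [w0|w0] := eqVneq (dotv w w) 0.
  by rewrite w0 !mul0r dotv_self_eq0 // expr0n addr0.
have wp : 0 < dotv w w by rewrite lt_def w0 dotvv_ge0.
have := dotvv_ge0 (dotv w w *: a - (dotv w w * dotv e a) *: e - dotv w a *: w).
rewrite !(dotvBl, dotvBr, dotvZl, dotvZr) ee we (dotvC e w) we (dotvC a e) (dotvC a w).
move=> h; have : 0 <= dotv w w *
  (dotv w w * dotv a a - (dotv w w * dotv e a ^+ 2 + dotv w a ^+ 2)) by nra.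
by rewrite pmulr_rge0 // subr_ge0.
Qed.

End Dotv.

Section Relu.
Variable R : realType.
Implicit Types p q x y : R.

Lemma relu_id p : 0 <= p -> relu p = p.
Proof. by move=> h; rewrite /relu max_l. Qed.

Lemma relu_0 p : p <= 0 -> relu p = 0.
Proof. by move=> h; rewrite /relu max_r. Qed.

Lemma relu_ge0 p : 0 <= relu p.
Proof. by rewrite /relu le_max lexx orbT. Qed.

Lemma relu_le1 p : p ^+ 2 <= 1 -> relu p <= 1.
Proof.
move=> h; case: (leP p 0) => hp; first by rewrite relu_0.
by rewrite relu_id; [nra | exact: ltW].
Qed.

Lemma reluZ x p : 0 <= x -> relu (x * p) = x * relu p.
Proof.
move=> hx; case: (leP p 0) => hp; last by rewrite !relu_id ?mulr_ge0 // ltW.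
by rewrite !relu_0 ?mulr0 // mulr_ge0_le0.
Qed.

End Relu.

(* [c] and [rho] are the cosine and sine of the angle between two unit vectors
   [u0] and [u = c u0 + w], [rho ^+ 2 = w . w]; a vector [a] of norm at most 1
   then has coordinates [p = u0 . a] and [c * p + x = u . a] with
   [rho ^+ 2 * p ^+ 2 + x ^+ 2 <= rho ^+ 2] (Bessel). *)
Section Rotation.
Variables (R : realType) (c rho : R).
Hypotheses (c_ge0 : 0 <= c) (rho_ge0 : 0 <= rho) (c_rho : c ^+ 2 + rho ^+ 2 = 1).
Implicit Types p q x y : R.

Lemma rotation_prod_le p x q y :
  rho ^+ 2 * p ^+ 2 + x ^+ 2 <= rho ^+ 2 ->
  rho ^+ 2 * q ^+ 2 + y ^+ 2 <= rho ^+ 2 ->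
  `|(c * p + x) * (c * q + y) - p * q| <= rho.
Proof.
move=> hp hq; set D := _ - _.
have [r0|rp] := eqVneq rho 0.
  have x0 : x = 0 by move: hp; rewrite r0; nra.
  have y0 : y = 0 by move: hq; rewrite r0; nra.
  have c1 : c = 1.
    move: c_rho; rewrite r0 expr0n addr0 => /eqP; rewrite sqrf_eq1.
    by case/orP=> /eqP // cN; move: c_ge0; rewrite cN; lra.
  by rewrite /D x0 y0 c1 r0 !addr0 !mul1r subrr normr0.
have rp' : 0 < rho by rewrite lt_def rp rho_ge0.
set al := p * y + q * x; set be := x * y - rho ^+ 2 * p * q.
have eD : D = c * al + be.
  have -> : D = c * al + be + (c ^+ 2 + rho ^+ 2 - 1) * p * q by rewrite /D /al /be; ring.
  by rewrite c_rho subrr !mul0r addr0.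
(* Lagrange's identity for the unit vector [(c, rho)], then Fibonacci's *)
have lagrange : (rho * D) ^+ 2 + (rho ^+ 2 * al - c * be) ^+ 2
    = (rho ^+ 2 * p ^+ 2 + x ^+ 2) * (rho ^+ 2 * q ^+ 2 + y ^+ 2).
  have -> : (rho * D) ^+ 2 + (rho ^+ 2 * al - c * be) ^+ 2
      = (c ^+ 2 + rho ^+ 2) * (rho ^+ 2 * al ^+ 2 + be ^+ 2) by rewrite eD; ring.
  by rewrite c_rho mul1r /al /be; ring.
have hD : rho ^+ 2 * D ^+ 2 <= rho ^+ 2 * rho ^+ 2.
  rewrite -exprMn; have := sqr_ge0 (rho ^+ 2 * al - c * be).
  have := sqr_ge0 p; have := sqr_ge0 q; have := sqr_ge0 x; have := sqr_ge0 y; nra.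
rewrite ler_norml; rewrite ler_pM2l ?exprn_gt0 // in hD; apply/andP; split; nra.
Qed.

Lemma relu_le_of_rotated_le0 p x :
  rho ^+ 2 * p ^+ 2 + x ^+ 2 <= rho ^+ 2 -> c * p + x <= 0 -> relu p <= rho.
Proof.
move=> hp hn; case: (leP p 0) => p0; first by rewrite relu_0.
rewrite relu_id; last exact: ltW.
have cp0 := mulr_ge0 c_ge0 (ltW p0).
have hx : (c * p) ^+ 2 <= x ^+ 2 by nra.
have p2 : p ^+ 2 <= rho ^+ 2 by rewrite -[p ^+ 2]mul1r -c_rho mulrDl -exprMn; lra.
by rewrite -ler_sqr ?nnegrE ?(ltW p0).
Qed.

Lemma relu_rotated_le_of_le0 p x :
  rho ^+ 2 * p ^+ 2 + x ^+ 2 <= rho ^+ 2 -> p <= 0 -> relu (c * p + x) <= rho.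
Proof.
move=> hp hn; case: (leP (c * p + x) 0) => h0; first by rewrite relu_0.
rewrite relu_id; last exact: ltW.
have cp0 := mulr_ge0_le0 c_ge0 hn.
have p2 : (c * p + x) ^+ 2 <= rho ^+ 2 by have := sqr_ge0 p; have := sqr_ge0 rho; nra.
by rewrite -ler_sqr ?nnegrE ?(ltW h0).
Qed.

Lemma relu_rotation_prod_le p x q y :
  rho ^+ 2 * p ^+ 2 + x ^+ 2 <= rho ^+ 2 ->
  rho ^+ 2 * q ^+ 2 + y ^+ 2 <= rho ^+ 2 ->
  p ^+ 2 <= 1 -> q ^+ 2 <= 1 -> (c * p + x) ^+ 2 <= 1 -> (c * q + y) ^+ 2 <= 1 ->
  `|relu (c * p + x) * relu (c * q + y) - relu p * relu q| <= rho.
Proof.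
move=> hp hq p1 q1 p'1 q'1.
have bound r s : 0 <= r -> r <= rho -> 0 <= s -> s <= 1 -> `|r * s| <= rho.
  move=> r0 rr s0 s1; rewrite ger0_norm ?mulr_ge0 //.
  by apply: le_trans (_ : rho * 1 <= _); [apply: ler_pM | rewrite mulr1].
case: (leP (c * p + x) 0) => hp'.
  rewrite (relu_0 hp') mul0r sub0r normrN.
  by apply: bound; rewrite ?relu_ge0 ?relu_le1 ?(relu_le_of_rotated_le0 hp).
case: (leP (c * q + y) 0) => hq'.
  rewrite (relu_0 hq') mulr0 sub0r normrN mulrC.
  by apply: bound; rewrite ?relu_ge0 ?relu_le1 ?(relu_le_of_rotated_le0 hq).
case: (leP p 0) => hp0.
  rewrite (relu_0 hp0) mul0r subr0.
  by apply: bound; rewrite ?relu_ge0 ?relu_le1 ?(relu_rotated_le_of_le0 hp).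
case: (leP q 0) => hq0.
  rewrite (relu_0 hq0) mulr0 subr0 mulrC.
  by apply: bound; rewrite ?relu_ge0 ?relu_le1 ?(relu_rotated_le_of_le0 hq).
by rewrite !relu_id ?(ltW hp') ?(ltW hq') ?(ltW hp0) ?(ltW hq0) ?rotation_prod_le.
Qed.

End Rotation.

Section Neuron.
Variables (R : realType) (k : nat).
Implicit Types (u v a b : 'rV[R]_k).

(* At [v = 0] this is [0], since [0^-1 = 0]. *)
Definition unitv v : 'rV[R]_k := (rnorm v)^-1 *: v.

Lemma dotv_unitv u v : dotv (unitv u) (unitv v) = dotv u v / (rnorm u * rnorm v).
Proof. by rewrite /unitv dotvZl dotvZr invfM; ring. Qed.

Lemma dotv_unitvv v : rnorm v != 0 -> dotv (unitv v) (unitv v) = 1.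
Proof. by move=> v0; rewrite dotv_unitv -rnorm_sqr expr2 mulfV ?mulf_neq0. Qed.

Lemma dotv_unitvv_le1 v : dotv (unitv v) (unitv v) <= 1.
Proof.
have [v0|v0] := eqVneq (rnorm v) 0; last by rewrite dotv_unitvv.
by rewrite dotv_unitv v0 mulr0 invr0 mulr0.
Qed.

(* [Gmat X v i j] unfolds to [m^-1 * \sum_k Gterm (X i) (X j) (v k)]. *)
Definition Gterm a b v : R := relu (dotv v a) * relu (dotv v b) / rnorm v ^+ 2.

Lemma Gterm_unitv a b v :
  Gterm a b v = relu (dotv (unitv v) a) * relu (dotv (unitv v) b).
Proof.
rewrite /Gterm /unitv !dotvZl !reluZ ?invr_ge0 ?rnorm_ge0 // -exprVn; ring.
Qed.

Lemma Gterm_ge0 a b v : 0 <= Gterm a b v.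
Proof. by rewrite Gterm_unitv mulr_ge0 ?relu_ge0. Qed.

Lemma Gterm_le1 a b v : rnorm a <= 1 -> rnorm b <= 1 -> Gterm a b v <= 1.
Proof.
move=> /rnorm_le1 ha /rnorm_le1 hb; rewrite Gterm_unitv.
by rewrite mulr_ile1 ?relu_ge0 ?relu_le1 ?dotv_sqr_le1 ?dotv_unitvv_le1.
Qed.

Lemma relu_dotv_unit_diff_le u u0 a b :
  dotv u u = 1 -> dotv u0 u0 = 1 -> 0 <= dotv u u0 -> dotv a a <= 1 -> dotv b b <= 1 ->
  `|relu (dotv u a) * relu (dotv u b) - relu (dotv u0 a) * relu (dotv u0 b)|
    <= Num.sqrt (1 - dotv u u0 ^+ 2).
Proof.
move=> uu u0u0 c_ge0 ha hb; set c := dotv u u0.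
set w := u - c *: u0.
have wu0 : dotv w u0 = 0 by rewrite /w dotvBl dotvZl u0u0 mulr1 subrr.
have ww : dotv w w = 1 - c ^+ 2.
  by rewrite /w !(dotvBl, dotvBr, dotvZl, dotvZr) uu u0u0 (dotvC u0 u) -/c; ring.
have c_le1 : c ^+ 2 <= 1 by rewrite dotv_sqr_le1 ?uu ?u0u0.
set rho := Num.sqrt _.
have rho2 : rho ^+ 2 = 1 - c ^+ 2 by rewrite sqr_sqrtr // subr_ge0.
have c_rho : c ^+ 2 + rho ^+ 2 = 1 by rewrite rho2 addrC subrK.
have u_split x : dotv u x = c * dotv u0 x + dotv w x.
  by rewrite /w dotvBl dotvZl; ring.
have bessel x : dotv x x <= 1 -> rho ^+ 2 * dotv u0 x ^+ 2 + dotv w x ^+ 2 <= rho ^+ 2.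
  move=> hx; rewrite rho2 -ww; apply: le_trans (bessel_orth_pair x u0u0 wu0) _.
  by rewrite ler_piMr ?dotvv_ge0.
have unit_sqr x : dotv x x <= 1 -> dotv u x ^+ 2 <= 1 /\ dotv u0 x ^+ 2 <= 1.
  by move=> hx; rewrite !dotv_sqr_le1 ?uu ?u0u0.
have [ua u0a] := unit_sqr a ha; have [ub u0b] := unit_sqr b hb.
rewrite !u_split; rewrite !u_split in ua ub.
by apply: relu_rotation_prod_le; rewrite ?sqrtr_ge0 ?bessel.
Qed.

Lemma rnorm_sin_le v v0 : rnorm v != 0 -> rnorm v0 != 0 ->
  rnorm v0 ^+ 2 * (1 - dotv (unitv v) (unitv v0) ^+ 2) <= rnorm (v - v0) ^+ 2.
Proof.
move=> sv sv0; rewrite dotv_unitv rnormB_sqr.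
set s := rnorm v; set s0 := rnorm v0; set t := dotv v v0.
have -> : s0 ^+ 2 * (1 - (t / (s * s0)) ^+ 2) = s0 ^+ 2 - (t / s) ^+ 2 by field; apply/andP.
have -> : s ^+ 2 - 2 * t + s0 ^+ 2 = (s - t / s) ^+ 2 + s0 ^+ 2 - (t / s) ^+ 2 by field.
by rewrite -addrA lerDr sqr_ge0.
Qed.

Lemma Gterm_lipschitz a b v v0 : rnorm a <= 1 -> rnorm b <= 1 -> 0 < rnorm v0 ->
  `|Gterm a b v - Gterm a b v0| <= rnorm (v - v0) / rnorm v0.
Proof.
move=> ha hb sv0.
have [obtuse|acute] := leP (dotv v v0) 0.
  apply: le_trans (_ : 1 <= _).
    have := Gterm_ge0 a b v; have := Gterm_ge0 a b v0.
    have := Gterm_le1 v ha hb; have := Gterm_le1 v0 ha hb.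
    by rewrite ler_norml; lra.
  rewrite ler_pdivlMr // mul1r -ler_sqr ?nnegrE ?rnorm_ge0 // rnormB_sqr.
  by have := sqr_ge0 (rnorm v); lra.
have sv : rnorm v != 0.
  apply: contraTneq acute => /eqP; rewrite -sqrf_eq0 rnorm_sqr => /eqP vv.
  by rewrite dotv_self_eq0 // ltxx.
have c_ge0 : 0 <= dotv (unitv v) (unitv v0).
  by rewrite dotv_unitv divr_ge0 ?mulr_ge0 ?rnorm_ge0 ?(ltW acute).
have uu := dotv_unitvv sv; have u0u0 := dotv_unitvv (lt0r_neq0 sv0).
rewrite !Gterm_unitv; apply: le_trans
  (relu_dotv_unit_diff_le uu u0u0 c_ge0 (rnorm_le1 ha) (rnorm_le1 hb)) _.
rewrite ler_pdivlMr // -ler_sqr ?nnegrE ?mulr_ge0 ?sqrtr_ge0 ?rnorm_ge0 //.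
rewrite exprMn sqr_sqrtr ?subr_ge0 ?dotv_sqr_le1 ?dotv_unitvv_le1 // mulrC.
exact: rnorm_sin_le sv (lt0r_neq0 sv0).
Qed.

End Neuron.

Lemma spec_norm_le_entrywise (R : realType) n (M : 'M[R]_n) eps : 0 <= eps ->
  (forall i j, `|M i j| <= eps) -> spec_norm M <= n%:R * eps.
Proof.
move=> eps0 hM; rewrite /spec_norm; apply: ge_sup.
  exists (rnorm (0 *m M)), 0 => //=.
  by rewrite /rnorm big1 ?sqrtr0 // => i _; rewrite mxE expr0n.
move=> _ [u /rnorm_le1 hu <-].
have col_le j : (u *m M) 0 j ^+ 2 <= n%:R * eps ^+ 2.
  have -> : (u *m M) 0 j = dotv u (\row_i M i j).
    by rewrite mxE; apply: eq_bigr => i _; rewrite mxE.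
  apply: le_trans (dotv_CauchySchwarz _ _) _.
  have : dotv (\row_i M i j) (\row_i M i j) <= n%:R * eps ^+ 2.
    apply: le_trans (_ : \sum_(i < n) eps ^+ 2 <= _); last first.
      by rewrite sumr_const card_ord mulr_natl.
    apply: ler_sum => i _; rewrite !mxE -expr2 -real_normK ?num_real //.
    by rewrite ler_sqr ?nnegrE ?normr_ge0.
  by have := dotvv_ge0 u; have := dotvv_ge0 (\row_i M i j); nra.
have hne : 0 <= n%:R * eps by rewrite mulr_ge0.
rewrite /rnorm -(ger0_norm hne) -sqrtr_sqr ler_wsqrtr //.
apply: le_trans (_ : \sum_(j < n) n%:R * eps ^+ 2 <= _); first exact: ler_sum.
by rewrite sumr_const card_ord -mulr_natl; lra.
Qed.

Lemma spec_norm_Gmat_sub_le (R : realType) n m d (X : 'I_n -> 'rV[R]_d)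
    (v v0 : 'I_m -> 'rV[R]_d) r Rv :
  (0 < m)%N -> 0 < r -> (forall i, rnorm (X i) <= 1) ->
  (forall k, r < rnorm (v0 k)) -> (forall k, rnorm (v k - v0 k) <= Rv) ->
  spec_norm (Gmat X v - Gmat X v0) <= n%:R * (Rv / r).
Proof.
move=> m_gt0 r_gt0 hX hv0 hv.
have Rv_ge0 : 0 <= Rv := le_trans (rnorm_ge0 _) (hv (Ordinal m_gt0)).
have v0_gt0 k : 0 < rnorm (v0 k) := lt_trans r_gt0 (hv0 k).
have term_le k : rnorm (v k - v0 k) / rnorm (v0 k) <= Rv / r.
  rewrite ler_pdivrMr //; apply: le_trans (hv k) _.
  rewrite -[X in X <= _](divfK (lt0r_neq0 r_gt0)).
  by apply: ler_wpM2l; [rewrite divr_ge0 // ltW | exact: ltW].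
apply: spec_norm_le_entrywise => [|i j]; first by rewrite divr_ge0 // ltW.
rewrite !mxE -mulrBr -sumrB normrM ger0_norm ?invr_ge0 ?ler0n //.
rewrite ler_pdivrMl ?ltr0n //; apply: le_trans (ler_norm_sum _ _ _) _.
apply: le_trans (_ : \sum_(k < m) (Rv / r) <= _); last first.
  by rewrite sumr_const card_ord mulr_natl.
apply: ler_sum => k _.
exact: le_trans (Gterm_lipschitz (v k) (hX i) (hX j) (v0_gt0 k)) (term_le k).
Qed.

Lemma normal_prob_itv_le (R : realType) (mu s a b : R) : s != 0 -> a <= b ->
  (normal_prob mu s `[a, b] <= (normal_peak s * (b - a))%:E)%E.
Proof.
move=> s0 ab; rewrite /normal_prob.
apply: (@le_trans _ _ (\int[lebesgue_measure]_(x in `[a, b]) (normal_peak s)%:E)%E).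
  apply: ge0_le_integral => //=.
  - by move=> x _; rewrite lee_fin normal_pdf_ge0.
  - by apply/measurable_EFinP; apply: measurable_funTS; exact: measurable_normal_pdf.
  - by move=> x _; rewrite lee_fin normal_pdf_ub.
rewrite integral_cst //= lebesgue_measure_itv /= lte_fin.
case: ifP => [_|]; first by rewrite -EFinD -EFinM.
by rewrite mule0 lee_fin mulr_ge0 ?normal_peak_ge0 // subr_ge0.
Qed.

Lemma measure_bigcup_ord_le (R : realType) (dT : measure_display) (T : measurableType dT)
    (mu : {measure set T -> \bar R}) m (C : 'I_m -> set T) :
  (forall k, measurable (C k)) ->
  (mu (\bigcup_(k in [set: 'I_m]) C k) <= \sum_(k < m) mu (C k))%E.
Proof.
move=> mC; have mU : measurable (\bigcup_(k in [set: 'I_m]) C k).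
  by apply: fin_bigcup_measurable finite_finset _ => k _; exact: mC.
apply: le_trans (content_sub_fsum mu (@finite_finset _ [set: 'I_m]) (fun k _ => mC k) mU _) _ => //.
rewrite fsbig_finite //= (perm_big (index_enum _)) //.
apply: uniq_perm; rewrite ?finmap.fset_uniq ?index_enum_uniq // => k.
by rewrite mem_index_enum in_fset_set ?in_setT //; exact: finite_finset.
Qed.

Definition coords_in (T R : Type) (d : nat) (W : 'I_d -> T -> R) (I : set R) : set T :=
  \bigcap_(l in [set: 'I_d]) W l @^-1` I.

Lemma rnorm_rvec_gt (T : Type) (R : realType) d (W : 'I_d -> T -> R) r w :
  ~ coords_in W `[(- r)%R, r] w -> r < rnorm (rvec W w).
Proof.
move=> out; rewrite ltNge; apply/negP => le_r; apply: out => l _.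
rewrite /= in_itv /= -ler_norml; apply: le_trans le_r.
by have := coord_le_rnorm (rvec W w) l; rewrite mxE.
Qed.

Section IidGaussian.
Variables (R : realType) (dT : measure_display) (T : measurableType dT).
Variables (P : probability T R) (m d : nat) (V : 'I_m -> 'I_d -> T -> R) (alpha : R).
Hypotheses (alpha_gt0 : 0 < alpha) (hV : iid_gaussian P V alpha).

Lemma measurable_coords_in k I : measurable I -> measurable (coords_in (V k) I).
Proof.
move=> mI; have [mV _] := hV; apply: fin_bigcap_measurable finite_finset _ => l _.
by rewrite -[_ @^-1` _]setTI; exact: mV.
Qed.

Lemma prob_coords_in k I : measurable I ->
  P (coords_in (V k) I) = (\prod_(l < d) normal_prob 0 alpha I)%E.
Proof.
move=> mI; have [_ [law indep]] := hV.
pose B k' (l : 'I_d) := if k' == k then I else setT.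
have -> : coords_in (V k) I = [set w | forall k' l, B k' l (V k' l w)].
  apply/seteqP; split => w /= h => [k' l|l _]; last by have := h k l; rewrite /B eqxx.
  by rewrite /B; case: eqP => [->|//]; exact: h.
rewrite indep => [|k' l]; last by rewrite /B; case: ifP.
rewrite (bigD1 k) //= [X in (_ * X)%E]big1 ?mule1; last first.
  move=> k' /negbTE k'k; apply: big1 => l _.
  by rewrite /B k'k preimage_setT probability_setT.
by apply: eq_bigr => l _; rewrite /B eqxx law.
Qed.

Lemma prob_coords_in_itv_le k (r : R) : 0 <= r ->
  (P (coords_in (V k) `[(- r)%R, r]) <= ((normal_peak alpha * (r *+ 2)) ^+ d)%:E)%E.
Proof.
move=> r_ge0; rewrite prob_coords_in //.
have : (normal_prob 0 alpha `[(- r)%R, r] <= (normal_peak alpha * (r *+ 2))%:E)%E.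
  have -> : r *+ 2 = r - - r by rewrite opprK mulr2n.
  by apply: normal_prob_itv_le; [exact: lt0r_neq0 | lra].
have : (0 <= normal_prob 0 alpha `[(- r)%R, r])%E.
  by rewrite integral_ge0 // => x _; rewrite lee_fin normal_pdf_ge0.
case: (normal_prob 0 alpha `[(- r)%R, r]) => [p | | ] //= p_ge0 p_le.
rewrite prodEFin lee_fin prodr_const card_ord.
apply: lerXn2r; rewrite ?nnegrE.
- by rewrite -lee_fin.
- by rewrite mulr_ge0 ?normal_peak_ge0 ?mulrn_wge0.
- by rewrite -lee_fin.
Qed.

Lemma measurable_some_coords_in (I : set R) : measurable I ->
  measurable (\bigcup_(k in [set: 'I_m]) coords_in (V k) I).
Proof.
move=> mI; apply: fin_bigcup_measurable finite_finset _ => k _.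
exact: measurable_coords_in.
Qed.

Lemma prob_no_coords_in_itv_ge (r : R) : 0 <= r ->
  ((1 - m%:R * (normal_peak alpha * (r *+ 2)) ^+ d)%:E
    <= P (~` \bigcup_(k in [set: 'I_m]) coords_in (V k) `[(- r)%R, r]))%E.
Proof.
move=> r_ge0; set bad := \bigcup_(k in _) _.
have mbad : measurable bad := measurable_some_coords_in (measurable_itv _).
have bad_le : (P bad <= (m%:R * (normal_peak alpha * (r *+ 2)) ^+ d)%:E)%E.
  apply: le_trans (measure_bigcup_ord_le P (fun k => measurable_coords_in k (measurable_itv _))) _.
  apply: le_trans (lee_sum _ (fun k _ => prob_coords_in_itv_le k r_ge0)) _.
  by rewrite sumEFin sumr_const card_ord mulr_natl.
rewrite probability_setC //; move: bad_le.
have : P bad \is a fin_num by rewrite fin_num_measure.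
by case: (P bad) => // p _; rewrite !lee_fin => p_le; lra.
Qed.

End IidGaussian.

Lemma powR_invn_exprn (R : realType) (a : R) n : 0 <= a -> (0 < n)%N ->
  (a `^ n%:R^-1) ^+ n = a.
Proof.
move=> a_ge0 n_gt0; rewrite -powR_mulrn ?powR_ge0 // -powRrM mulVf ?powRr1 //.
by rewrite pnatr_eq0 -lt0n.
Qed.

Lemma normal_peak_radius (R : realType) (alpha K : R) : 0 < alpha -> 0 < K ->
  normal_peak alpha * ((Num.sqrt (2 * pi) * alpha / (2 * K)) *+ 2) = K^-1.
Proof.
move=> alpha_gt0 K_gt0; rewrite /normal_peak.
have -> : alpha ^+ 2 * pi *+ 2 = alpha ^+ 2 * (2 * pi) by rewrite -mulr_natr; ring.
rewrite sqrtrM ?sqr_ge0 // sqrtr_sqr (ger0_norm (ltW alpha_gt0)).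
have : 0 < Num.sqrt (2 * pi) :> R by rewrite sqrtr_gt0 mulr_gt0 // pi_gt0.
by move=> ?; field; rewrite !lt0r_neq0.
Qed.

Lemma lambda_min0 (R : realType) (A : 'M[R]_0) : lambda_min A = 0.
Proof.
rewrite /lambda_min (_ : [set a | eigenvalue A a] = set0) ?inf0 //.
by apply/seteqP; split => a //=; rewrite /eigenvalue (flatmx0 (eigenspace A a)) eqxx.
Qed.

Theorem lemmaB5 (R : realType) (n m d : nat) (X : 'I_n -> 'rV[R]_d)
    (alpha delta : R) (dT : measure_display) (T : measurableType dT)
    (P : probability T R) (V : 'I_m -> 'I_d -> T -> R)
    (Hm : (0 < m)%N) (Hd : (0 < d)%N) :
  0 < alpha -> 0 < delta < 1 ->
  (forall i, rnorm (X i) <= 1) ->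
  (forall i j, i != j -> forall beta : R, beta != 0 -> X i != beta *: X j) ->
  iid_gaussian P V alpha ->
  let mu0 := lambda_min (Ginf P (V (Ordinal Hm)) X) in
  let Rv := Num.sqrt (2 * pi) * alpha * mu0
              / (8 * n%:R * powR (m%:R / delta) (d%:R^-1)) in
  let v0 := fun w (k : 'I_m) => rvec (V k) w in
  exists A : set T, measurable A /\
    A `<=` [set w | forall v : 'I_m -> 'rV[R]_d,
                      (forall k, rnorm (v k - v0 w k) <= Rv) ->
                      spec_norm (Gmat X v - Gmat X (v0 w)) <= mu0 / 4] /\
    ((1 - delta)%:E <= P A)%E.
Proof.
move=> alpha_gt0 /andP[delta_gt0 delta_lt1] hX _ hV mu0 Rv v0.
set K := powR (m%:R / delta) d%:R^-1.
have md_gt0 : 0 < m%:R / delta by rewrite divr_gt0 // ltr0n.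
have K_gt0 : 0 < K by rewrite powR_gt0.
have sqrt2pi_gt0 : 0 < Num.sqrt (2 * pi) :> R by rewrite sqrtr_gt0 mulr_gt0 // pi_gt0.
pose r := Num.sqrt (2 * pi) * alpha / (2 * K).
have r_gt0 : 0 < r by rewrite divr_gt0 ?mulr_gt0.
exists (~` \bigcup_(k in [set: 'I_m]) coords_in (V k) `[(- r)%R, r]).
split; first exact/measurableC/(measurable_some_coords_in hV (measurable_itv _)).
split=> [w good v hv|].
  have v0_gt k : r < rnorm (v0 w k) by apply: rnorm_rvec_gt => box; apply: good; exists k.
  apply: le_trans (spec_norm_Gmat_sub_le Hm r_gt0 hX v0_gt hv) _.
  have [n0|n_neq0] := eqVneq n 0%N.
    by rewrite n0 mul0r; subst n; rewrite /mu0 lambda_min0 mul0r.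
  suff -> : n%:R * (Rv / r) = mu0 / 4 by [].
  by rewrite /Rv /r -/K; field; rewrite pnatr_eq0 n_neq0 !lt0r_neq0.
apply: le_trans (prob_no_coords_in_itv_ge alpha_gt0 hV (ltW r_gt0)).
rewrite /r normal_peak_radius // exprVn powR_invn_exprn ?(ltW md_gt0) //.
by rewrite invf_div mulrC divfK ?lt0r_neq0 ?ltr0n.
Qed.
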